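(* Assume the setting and assumptions (A1)–(A5) described in the context, so that the closure of $A$ generates a conservative Markov semigroup $\{T(t)\}_{t\ge0}$ in $C(\bar L)$ with $\|T_n^{[\varepsilon_n^{-1}t]}\pi_n(f)-\pi_n(T(t)f)\|_n\to0$ for all $f\in C(\bar L)$, and let $X(t)$ be the Markov process in $\bar L$ with transition semigroup $\{T(t)\}$. Assume additionally that the push-forward measures $\iota_n(M_n)$ converge weakly to a probability measure $P$ on $\bar L$. Then $P$ is an invariant distribution for $X(t)$, i.e. $\int_{\bar L}T(t)f\,dP=\int_{\bar L}f\,dP$ for all $f\in C(\bar L)$ and $t\ge0$.
   Context: $L=\bigsqcup_{n\ge0}L_n$ is a graded set with $L_0$ a singleton and each $L_n$ finite; $p^\downarrow:L\times L\to[0,\infty)$ vanishes unless $|\lambda|=|\mu|+1$ and $\sum_{\mu\in L_{|\lambda|-1}}p^\downarrow(\lambda,\mu)=1$ for $|\lambda|\ge1$. $\{M_n\}$ is a coherent system (probability measures on $L_n$ with $\sum_{\lambda\in L_n}M_n(\lambda)p^\downarrow(\lambda,\mu)=M_{n-1}(\mu)$) with $M_n(\lambda)>0$ everywhere; $p^\uparrow(\lambda,\nu)=\frac{M_{n+1}(\nu)}{M_n(\lambda)}p^\downarrow(\nu,\lambda)$; $(T_ng)(\lambda)=\sum_{\nu\in L_{n+1}}p^\uparrow(\lambda,\nu)\sum_{\tilde\lambda\in L_n}p^\downarrow(\nu,\tilde\lambda)g(\tilde\lambda)$ on real functions on $L_n$ (norm $\|g\|_n=\sup|g|$). $\bar L$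 is a topological space, $\iota_n:L_n\to\bar L$ injective, $\pi_n:C(\bar L)\to C(L_n)$, $(\pi_nf)(\lambda)=f(\iota_n(\lambda))$. Assumptions: (A1) $\bar L$ compact metrizable separable; (A2) every nonempty open set meets $\iota_n(L_n)$ for all large $n$; (A3) there is a dense subspace $\mathcal F\subset C(\bar L)$ with an exhaustive ascending sequence of finite-dimensional subspaces $\mathcal F^m$ such that for each $m$ and all large $n$, $\pi_n$ is injective on $\mathcal F^m$ and $\pi_n(\mathcal F^m)$ is $T_n$-invariant; (A4) there are $\varepsilon_n>0$, $\varepsilon_n\to0$, such that for $f\in\mathcal F^m$ the elements $g_n\in\mathcal F^m$ with $\pi_n(g_n)=\varepsilon_n^{-1}(T_n-\mathbf 1)\pi_n f$ converge in $\mathcal F^m$ to a limit $Af$; (A5) $1\in\mathcal F$. *)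

From HB Require Import structures.
From mathcomp Require Import all_boot all_order all_algebra.
From mathcomp Require Import all_classical all_reals all_analysis.
Set Implicit Arguments. Unset Strict Implicit. Unset Printing Implicit Defensive.
Import Order.TTheory GRing.Theory Num.Theory numFieldNormedType.Exports.
Local Open Scope ring_scope.

(* The graded set L = \bigsqcup_n L_n is encoded as a family of finite types
   L : nat -> finType; the down transition function p^\downarrow restricted to
   pairs with |lambda| = |mu| + 1 is  pdown n : L n.+1 -> L n -> R
   (it vanishes on all other pairs). *)

Definition pup {R : realType} (L : nat -> finType)
  (pdown : forall n, L n.+1 -> L n -> R) (M : forall n, L n -> R)
  (n : nat) (lam : L n) (nu : L n.+1) : R :=
  M n.+1 nu / M n lam * pdown n nu lam.

Definition Tn {R : realType} (L : nat -> finType)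
  (pdown : forall n, L n.+1 -> L n -> R) (M : forall n, L n -> R)
  (n : nat) (g : L n -> R) : L n -> R :=
  fun lam => \sum_(nu : L n.+1) pup pdown M lam nu *
                 \sum_(lam' : L n) pdown n nu lam' * g lam'.

Definition supn {R : realType} (F : finType) (g : F -> R) : R :=
  \big[Num.max/0]_(x : F) `|g x|.

Definition pin {R : realType} {X : Type} (L : nat -> finType)
  (iota : forall n, L n -> X) (n : nat) (f : X -> R) : L n -> R :=
  fun lam => f (iota n lam).

Definition fspan {R : realType} {X : Type} (k : nat) (b : 'I_k -> X -> R)
  : set (X -> R) :=
  [set g | exists c : 'I_k -> R, g = (fun x => \sum_(i < k) c i * b i x)].

Arguments pin {R X L} iota n f _.
Arguments Tn {R L} pdown M n g _.

From HB Require Import structures.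
From mathcomp Require Import all_boot all_order all_algebra.
From mathcomp Require Import all_classical all_reals all_analysis.
Import Order.TTheory GRing.Theory Num.Theory numFieldNormedType.Exports.
Local Open Scope classical_set_scope.
Local Open Scope ring_scope.

(* Coherence of {M_n} says exactly that M_n is invariant for the up-down chain
   T_n, hence for all its iterates.  Integrating the approximation
   T_n^[t/eps_n] pi_n f ~ pi_n (T(t) f) against M_n therefore gives
   M_n(pi_n f) - M_n(pi_n (T(t) f)) -> 0, while by weak convergence the two
   terms tend to P(f) and P(T(t) f). *)

Section UpDownChain.

Context {R : realType} {L : nat -> finType}.
Context {pdown : forall n, L n.+1 -> L n -> R} {M : forall n, L n -> R}.
Hypothesis pdown_stochastic : forall n (lam : L n.+1), \sum_(mu : L n) pdown n lam mu = 1.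
Hypothesis M_gt0 : forall n (lam : L n), 0 < M n lam.
Hypothesis M_coherent : forall n (mu : L n),
  \sum_(lam : L n.+1) M n.+1 lam * pdown n lam mu = M n mu.

Lemma M_mul_pup n (lam : L n) (nu : L n.+1) :
  M n lam * pup pdown M lam nu = M n.+1 nu * pdown n nu lam.
Proof. by rewrite /pup mulrA [M n lam * _]mulrC mulfVK // gt_eqF. Qed.

Lemma M_Tn_invariant n (g : L n -> R) :
  \sum_lam M n lam * Tn pdown M n g lam = \sum_lam M n lam * g lam.
Proof.
pose down nu := \sum_(lam' : L n) pdown n nu lam' * g lam'.
have up_then_down :
    \sum_lam M n lam * Tn pdown M n g lam = \sum_nu M n.+1 nu * down nu.
  rewrite /Tn (eq_bigr (fun lam => \sum_nu M n.+1 nu * pdown n nu lam * down nu));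
    last by move=> lam _; rewrite big_distrr; apply: eq_bigr => nu _ /=;
            rewrite mulrA M_mul_pup.
  rewrite exchange_big; apply: eq_bigr => nu _.
  by rewrite -big_distrl -big_distrr /= pdown_stochastic mulr1.
rewrite up_then_down /down.
under eq_bigr do rewrite big_distrr.
rewrite exchange_big; apply: eq_bigr => mu _ /=.
by under eq_bigr do rewrite mulrA; rewrite -big_distrl /= M_coherent.
Qed.

Lemma M_iter_Tn_invariant n j (g : L n -> R) :
  \sum_lam M n lam * iter j (Tn pdown M n) g lam = \sum_lam M n lam * g lam.
Proof. by elim: j => [//|j IH] /=; rewrite M_Tn_invariant. Qed.

End UpDownChain.

Lemma ler_supn (R : realType) (F : finType) (g : F -> R) x : `|g x| <= supn g.
Proof. exact: le_bigmax. Qed.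

Lemma normr_wavg_le_supn (R : realType) (F : finType) (w g : F -> R) :
  (forall x, 0 <= w x) -> \sum_x w x = 1 ->
  `|\sum_x w x * g x| <= supn g.
Proof.
move=> w_ge0 w_sum1.
apply: le_trans (ler_norm_sum _ _ _) _.
apply: (@le_trans _ _ (\sum_x w x * supn g)); last by rewrite -big_distrl /= w_sum1 mul1r.
apply: ler_sum => x _; rewrite normrM ger0_norm //.
by rewrite ler_wpM2l // ler_supn.
Qed.

Lemma EFin_cvg_eq_of_subr_cvg0 {R : realType} {u v : nat -> R} {x y : \bar R} :
  (fun n => (u n)%:E) @ \oo --> x -> (fun n => (v n)%:E) @ \oo --> y ->
  (fun n => u n - v n) @ \oo --> 0 -> x = y.
Proof.
move=> ux vy uv0.
have uv0E : (fun n => (u n - v n)%:E) @ \oo --> 0%:E.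
  by apply/fine_cvgP; split; [near=> n|].
have : (fun n => (v n)%:E + (u n - v n)%:E)%E @ \oo --> (y + 0%:E)%E.
  by apply: cvgeD => //; exact: fin_num_adde_defl.
rewrite adde0 (_ : (fun n => _) = (fun n => (u n)%:E)) => [uy|].
  exact: cvg_unique ux uy.
by apply/funext => n; rewrite -EFinD addrC subrK.
Unshelve. all: end_near.
Qed.

Theorem proposition1p6
  (R : realType)
  (* the graded set L, down transitions, coherent system *)
  (L : nat -> finType)
  (pdown : forall n, L n.+1 -> L n -> R)
  (M : forall n, L n -> R)
  (* the space \bar L, embeddings iota_n *)
  (X : pseudoPMetricType R)
  (iota : forall n, L n -> X)
  (* finite-dimensional subspaces F^m, scales eps_n, operator A *)
  (Fm : nat -> set (X -> R))
  (eps : nat -> R)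
  (A : (X -> R) -> (X -> R))
  (* the semigroup T(t) and the limit measure P *)
  (T : R -> (X -> R) -> (X -> R))
  (P : probability (g_sigma_algebraType (@open X)) R)
  (* L_0 is a singleton *)
  (HL0 : #|L 0| = 1%N)
  (* p^down is nonnegative and stochastic *)
  (Hpd0 : forall n (lam : L n.+1) (mu : L n), 0 <= pdown n lam mu)
  (Hpd1 : forall n (lam : L n.+1), \sum_(mu : L n) pdown n lam mu = 1)
  (* M_n are probability measures, strictly positive, coherent *)
  (HMpos : forall n (lam : L n), 0 < M n lam)
  (HM1 : forall n, \sum_(lam : L n) M n lam = 1)
  (Hcoh : forall n (mu : L n),
      \sum_(lam : L n.+1) M n.+1 lam * pdown n lam mu = M n mu)
  (* iota_n injective *)
  (Hiota : forall n, injective (iota n))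
  (* (A1) \bar L compact metrizable separable *)
  (HA1h : hausdorff_space X)
  (HA1c : compact [set: X])
  (HA1s : exists D : set X, countable D /\ closure D = [set: X])
  (* (A2) *)
  (HA2 : forall U : set X, open U -> U !=set0 ->
      \forall n \near \oo, exists lam : L n, U (iota n lam))
  (* (A3) F = \bigcup_m F^m is a dense subspace of C(\bar L), the F^m are
     ascending finite-dimensional subspaces *)
  (HA3fin : forall m, exists k (b : 'I_k -> X -> R), Fm m = fspan b)
  (HA3cont : forall m g, Fm m g -> continuous g)
  (HA3asc : forall m, Fm m `<=` Fm m.+1)
  (HA3dense : forall f : X -> R, continuous f -> forall e : R, 0 < e ->
      exists m g, Fm m g /\ forall x, `|f x - g x| < e)
  (HA3inj : forall m, \forall n \near \oo,
      forall g h, Fm m g -> Fm m h -> pin iota n g = pin iota n h -> g = h)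
  (HA3inv : forall m, \forall n \near \oo,
      forall g, Fm m g -> exists h, Fm m h /\ Tn pdown M n (pin iota n g) = pin iota n h)
  (* (A4) *)
  (HA4pos : forall n, 0 < eps n)
  (HA4lim : eps @ \oo --> 0)
  (HA4 : forall m f, Fm m f -> Fm m (A f) /\
      forall g : nat -> X -> R,
        (\forall n \near \oo, Fm m (g n) /\
           pin iota n (g n) =
             (fun lam => (eps n)^-1 * (Tn pdown M n (pin iota n f) lam - pin iota n f lam))) ->
        forall e : R, 0 < e -> \forall n \near \oo, forall x, `|g n x - A f x| < e)
  (* (A5) *)
  (HA5 : exists m, Fm m (fun _ => 1))
  (* T(t) acts on C(\bar L) and is approximated by the chains T_n *)
  (HTcont : forall t f, 0 <= t -> continuous f -> continuous (T t f))
  (HTapprox : forall f, continuous f -> forall t, 0 <= t ->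
      (fun n => supn (fun lam : L n =>
          iter (Num.truncn ((eps n)^-1 * t)) (Tn pdown M n) (pin iota n f) lam
          - pin iota n (T t f) lam)) @ \oo --> 0)
  (* iota_n(M_n) converges weakly to P *)
  (Hweak : forall f : X -> R, continuous f ->
      (fun n => (\sum_(lam : L n) M n lam * f (iota n lam))%:E) @ \oo -->
        (\int[P]_x (f x)%:E)%E)
  : forall f : X -> R, continuous f -> forall t : R, 0 <= t ->
      (\int[P]_x ((T t f) x)%:E = \int[P]_x (f x)%:E)%E.
Proof.
move=> f f_cont t t_ge0.
apply: (EFin_cvg_eq_of_subr_cvg0 (Hweak _ (HTcont t f t_ge0 f_cont)) (Hweak _ f_cont)).
set k := fun n => Num.truncn ((eps n)^-1 * t).
set err := fun n (lam : L n) =>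
  iter (k n) (Tn pdown M n) (pin iota n f) lam - pin iota n (T t f) lam.
have err_bound n : `|\sum_lam M n lam * T t f (iota n lam)
                     - \sum_lam M n lam * f (iota n lam)| <= supn (err n).
  rewrite -[X in _ - X](M_iter_Tn_invariant Hpd1 HMpos Hcoh n (k n) (pin iota n f)).
  rewrite distrC -sumrB.
  under eq_bigr do rewrite -mulrBr.
  exact: (@normr_wavg_le_supn R (L n) (M n) (err n) (fun lam => ltW (HMpos n lam)) (HM1 n)).
apply: (@squeeze_cvgr _ _ _ _ (fun n => - supn (err n)) (fun n => supn (err n))).
- by near=> n; rewrite -ler_norml err_bound.
- by rewrite -oppr0; apply: cvgN; exact: HTapprox.
- exact: HTapprox.
Unshelve. all: end_near.
Qed.
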